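(* Let $\gamma\in\Gamma$ and let $C$, $C'$ be ordinary non-singular plane quartics defined over $k$ for which there exist $Q,Q'\in\mathcal{D}_\gamma$ and isomorphisms $\phi:C\to C_Q$, $\phi':C'\to C_{Q'}$ (defined over $\overline{k}$) with $\sigma\phi\circ\phi^{-1}=\gamma=\sigma\phi'\circ\phi'^{-1}$. Then the sets of bitangents $\mathcal{B}$ of $C$ and $\mathcal{B}'$ of $C'$ are $\mathrm{PGL}_3(k)$-equivalent, i.e. there is $\eta\in\mathrm{PGL}_3(k)$ with $\eta(\mathcal{B})=\mathcal{B}'$.
   Context: $k=\mathbb{F}_q$, $q$ a power of 2, $\overline{k}$ an algebraic closure, $\sigma(a)=a^q$ the Frobenius, acting coefficientwise on polynomials and maps. Isomorphisms between non-singular plane quartics are induced by elements of $\mathrm{PGL}_3(\overline{k})$. For $\gamma\in\mathrm{PGL}_3(\overline{k})$ with rows $\ell_1,\ell_2,\ell_3$ and homogeneous $F$, $F^\gamma=F(\ell_1,\ell_2,\ell_3)$. $\mathcal{Q}$ is the set of quadratic forms $Q=ax^2+by^2+cz^2+dxy+eyz+fzx$ over $\overline{k}$ with $abc\ne0$, $a+b+d\ne0$, $b+c+e\ne0$, $a+c+f\ne0$, $a+b+c+d+e+f\ne1$; $C_Q:Q^2=xyz(x+y+z)$. $\Gamma=\mathrm{PGL}_3(\mathbb{F}_2)$; for $\gamma\in\Gamma$ with rows $\ell_i$, $H_\gamma$ is defined by $\ell_1\ell_2\ell_3(\ell_1+\ell_2+\ell_3)=xyz(x+y+z)+H_\gamma^2$,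 $\gamma(Q)=Q^{\gamma^{-1}}+H_{\gamma^{-1}}$ (so $\gamma(C_Q)=C_{\gamma(Q)}$), and $\mathcal{D}_\gamma=\{Q\in\mathcal{Q}:\gamma(Q)=\sigma Q\}$. Ordinary means the Jacobian has 2-rank 3. *)

From HB Require Import structures.
From mathcomp Require Import all_boot all_order all_algebra.
From mathcomp Require Import mpoly.
Set Implicit Arguments. Unset Strict Implicit. Unset Printing Implicit Defensive.
Import Order.TTheory GRing.Theory.
Local Open Scope ring_scope.

Section Defs.
Variable K : fieldType.

(* K is algebraic over F_2: every element lies in some finite field F_(2^m). *)
Definition algebraic_over_F2 : Prop :=
  forall a : K, exists m : nat, (0 < m)%N /\ a ^+ (2 ^ m) = a.

Definition frob (q : nat) (a : K) : K := a ^+ q.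

Definition in_k (q : nat) (a : K) : Prop := frob q a = a.

Definition sigmaP (q : nat) (F : {mpoly K[3]}) : {mpoly K[3]} :=
  map_mpoly (frob q) F.
Definition sigmaM (q : nat) (M : 'M[K]_3) : 'M[K]_3 := map_mx (frob q) M.

(* F^gamma = F(l_1, l_2, l_3), l_i = sum_j gamma_ij X_j the rows of gamma *)
Definition subst (M : 'M[K]_3) (F : {mpoly K[3]}) : {mpoly K[3]} :=
  F \mPo [tuple \sum_(j < 3) M i j *: 'X_j | i < 3].

Definition linform (a : 'rV[K]_3) : {mpoly K[3]} := \sum_(j < 3) a 0 j *: 'X_j.

Definition form_over_k (q : nat) (F : {mpoly K[3]}) : Prop :=
  forall m, in_k q (F@_m).

Definition nonsingular (F : {mpoly K[3]}) : Prop :=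
  forall v : 'I_3 -> K, (exists i, v i != 0) ->
    ~ (F.@[v] = 0 /\ forall i : 'I_3, (mderiv i F).@[v] = 0).

(* Hasse-Witt (Cartier-Manin) matrix of a plane quartic in char 2
   (Stoehr-Voloch): entry (i,j) is the coefficient of F^(p-1) = F at the
   monomial x^(p u_i - u_j), u_i = (1,1,1) + e_i. *)
Definition hw_mono (i j : 'I_3) : 'X_{1..3} :=
  [multinom (1 + 2 * (k == i) - (k == j))%N | k < 3].
Definition hasse_witt (F : {mpoly K[3]}) : 'M[K]_3 :=
  \matrix_(i < 3, j < 3) F@_(hw_mono i j).

(* ordinary: Jacobian has 2-rank 3 = genus, i.e. Hasse-Witt matrix invertible *)
Definition ordinary (F : {mpoly K[3]}) : Prop := hasse_witt F \in unitmx.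

Definition ord_quartic_over_k (q : nat) (F : {mpoly K[3]}) : Prop :=
  [/\ F \is 4.-homog, form_over_k q F, nonsingular F & ordinary F].

(* the line a_0 x + a_1 y + a_2 z = 0 is a bitangent of F = 0:
   F restricted to the line is a square, i.e. F = q^2 mod the linear form *)
Definition bitangent (F : {mpoly K[3]}) (a : 'rV[K]_3) : Prop :=
  exists (qf c : {mpoly K[3]}), qf \is 2.-homog /\ F = qf ^+ 2 + linform a * c.

Definition G0 : {mpoly K[3]} :=
  'X_0 * 'X_1 * 'X_2 * ('X_0 + 'X_1 + 'X_2).

(* equation of C_Q : Q^2 = xyz(x+y+z) (char 2) *)
Definition CQ (Q : {mpoly K[3]}) : {mpoly K[3]} := Q ^+ 2 + G0.

Definition inQset (Q : {mpoly K[3]}) : Prop :=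
  exists a b c d e f : K,
    Q = a *: ('X_0 * 'X_0) + b *: ('X_1 * 'X_1) + c *: ('X_2 * 'X_2)
        + d *: ('X_0 * 'X_1) + e *: ('X_1 * 'X_2) + f *: ('X_2 * 'X_0)
    /\ a * b * c != 0 /\ a + b + d != 0 /\ b + c + e != 0 /\ a + c + f != 0
    /\ a + b + c + d + e + f != 1.

(* Gamma = PGL_3(F_2) = GL_3(F_2), as 0/1 invertible matrices over K *)
Definition inGamma (g : 'M[K]_3) : Prop :=
  g \in unitmx /\ forall i j, g i j = 0 \/ g i j = 1.

Definition isH (g : 'M[K]_3) (H : {mpoly K[3]}) : Prop :=
  subst g G0 = G0 + H ^+ 2.

(* Q in D_gamma : gamma(Q) = Q^(gamma^-1) + H_(gamma^-1) equals sigma Q *)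
Definition inD (q : nat) (g : 'M[K]_3) (Q : {mpoly K[3]}) : Prop :=
  inQset Q /\ exists H, isH (invmx g) H /\ sigmaP q Q = subst (invmx g) Q + H.

(* M in PGL_3(K) induces an isomorphism C:F=0 -> C':F'=0, P |-> M P,
   i.e. F'(M P) is a nonzero multiple of F(P) *)
Definition iso_by (M : 'M[K]_3) (F F' : {mpoly K[3]}) : Prop :=
  M \in unitmx /\ exists lam : K, lam != 0 /\ subst M F' = lam *: F.

(* sigma(phi) o phi^-1 = gamma in PGL_3 *)
Definition cocycle_eq (q : nat) (M g : 'M[K]_3) : Prop :=
  exists c : K, c != 0 /\ sigmaM q M *m invmx M = c *: g.

Definition in_PGL3_k (q : nat) (eta : 'M[K]_3) : Prop :=
  eta \in unitmx /\ forall i j, in_k q (eta i j).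

End Defs.

From HB Require Import structures.
From mathcomp Require Import all_boot all_order all_algebra all_field.
From mathcomp Require Import mpoly.
Import GRing.Theory.
Local Open Scope ring_scope.

(* In characteristic 2, Q^2 + xyz(x+y+z) is a square modulo a line l iff
   xyz(x+y+z) is, so all the curves C_Q have the same bitangents.  Transporting
   them along phi and phi', the bitangents of C and C' correspond under
   A = phi'^-1 phi, and the two cocycle relations give sigma(A) = c A.  As the
   base field is algebraically closed, rescaling A by a (q-1)-th root of 1/c
   makes it Frobenius-invariant, i.e. an element of PGL_3(k). *)

Section CompMpoly.
Context {R : comNzRingType} {n k l : nat}.

Lemma comp_mpolyA (p : {mpoly R[n]}) (lq : n.-tuple {mpoly R[k]})
    (lr : k.-tuple {mpoly R[l]}) :
  (p \mPo lq) \mPo lr = p \mPo [tuple tnth lq i \mPo lr | i < n].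
Proof.
rewrite (comp_mpolyEX p lq) [RHS]comp_mpolyEX raddf_sum /=; apply: eq_bigr => m _.
rewrite comp_mpolyZ !comp_mpolyX rmorph_prod; congr (_ *: _).
by apply: eq_bigr => i _; rewrite rmorphXn tnth_mktuple.
Qed.

Lemma comp_mpoly_homog (p : {mpoly R[n]}) (lq : n.-tuple {mpoly R[k]}) d e :
  (forall i, tnth lq i \is e.-homog) -> p \is d.-homog -> p \mPo lq \is (d * e).-homog.
Proof.
move=> hlq /dhomogP hp; rewrite comp_mpolyEX big_seq.
apply: rpred_sum => m /hp <-; apply: dhomogZ; rewrite comp_mpolyX.
have -> : (mdeg m * e = \sum_(i < n) m i * e)%N by rewrite mdegE big_distrl.
elim/big_rec2: _ => [|i d' q _ hq]; first exact: dhomog1.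
by apply: dhomogM hq; rewrite mulnC; apply: dhomogMn.
Qed.
End CompMpoly.

Section TernaryForms.
Context {K : fieldType}.
Implicit Types (F G Q : {mpoly K[3]}) (M N : 'M[K]_3) (b : 'rV[K]_3).

HB.instance Definition _ M := GRing.LRMorphism.copy (subst M)
  (comp_mpoly [tuple \sum_(j < 3) M i j *: 'X_j | i < 3]).

Lemma linformZ (mu : K) b : linform (mu *: b) = mu *: linform b.
Proof.
rewrite /linform scaler_sumr; apply: eq_bigr => j _.
by rewrite mxE scalerA.
Qed.

Lemma mpolyX_homog (i : 'I_3) : ('X_i : {mpoly K[3]}) \is 1.-homog.
Proof. by rewrite dhomogX; apply/eqP; apply: mdeg1. Qed.

Lemma linform_homog b : linform b \is 1.-homog.
Proof. by apply: rpred_sum => j _; rewrite dhomogZ ?mpolyX_homog. Qed.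

Lemma inQset_homog Q : inQset Q -> Q \is 2.-homog.
Proof.
case=> [a [b [c [d [e [f [-> _]]]]]]].
have hX i j : ('X_i * 'X_j : {mpoly K[3]}) \is 2.-homog.
  by apply: (dhomogM (d:=1) (e:=1)); apply: mpolyX_homog.
by rewrite !rpredD ?dhomogZ.
Qed.

Lemma subst_tuple_row M i :
  tnth [tuple \sum_(j < 3) M i j *: 'X_j | i < 3] i = linform (row i M).
Proof.
rewrite tnth_mktuple /linform.
by apply: eq_bigr => j _; rewrite mxE.
Qed.

Lemma subst_linform M b : subst M (linform b) = linform (b *m M).
Proof.
rewrite /subst /linform raddf_sum /=.
under eq_bigr => i _ do rewrite comp_mpolyZ comp_mpolyXU -tnth_nth subst_tuple_row.
rewrite /linform; under eq_bigr => i _ do rewrite scaler_sumr.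
rewrite exchange_big /=; apply: eq_bigr => j _.
by rewrite mxE scaler_suml; apply: eq_bigr => i _; rewrite mxE scalerA.
Qed.

Lemma subst_mulmx M N G : subst N (subst M G) = subst (M *m N) G.
Proof.
rewrite {1}/subst comp_mpolyA; congr comp_mpoly.
apply: eq_from_tnth => i; rewrite tnth_mktuple subst_tuple_row.
by rewrite -/(subst N _) subst_linform -row_mul subst_tuple_row.
Qed.

Lemma subst1mx G : subst 1%:M G = G.
Proof.
rewrite /subst -[RHS]comp_mpoly_id; congr comp_mpoly.
apply: eq_from_tnth => i; rewrite !tnth_mktuple.
rewrite (bigD1 i) //= mxE eqxx scale1r big1 ?addr0 // => j /negPf ji.
by rewrite mxE eq_sym ji scale0r.
Qed.

Lemma subst_homog M d G : G \is d.-homog -> subst M G \is d.-homog.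
Proof.
move=> hG; rewrite -[d]muln1; apply: comp_mpoly_homog hG => i.
by rewrite subst_tuple_row linform_homog.
Qed.

Lemma bitangent_subst M F b : bitangent F b -> bitangent (subst M F) (b *m M).
Proof.
case=> r [c [hr ->]]; exists (subst M r), (subst M c); split.
  exact: subst_homog.
by rewrite rmorphD rmorphM rmorphXn /= subst_linform.
Qed.

Lemma bitangent_scale_line F b (mu : K) :
  mu != 0 -> bitangent F (mu *: b) <-> bitangent F b.
Proof.
have scale nu b' : nu != 0 -> bitangent F b' -> bitangent F (nu *: b').
  move=> nu0 [r [c [hr ->]]]; exists r, (nu^-1 *: c); split => //.
  by rewrite linformZ -scalerAl -scalerAr scalerA divff // scale1r.
move=> mu0; split; last exact: scale.
by move/(scale mu^-1); rewrite invr_eq0 scalerA mulVf // scale1r; apply.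
Qed.
End TernaryForms.

Section ClosedField.
Context {K : closedFieldType}.
Implicit Types (F G : {mpoly K[3]}) (M : 'M[K]_3) (b : 'rV[K]_3).

Lemma closed_field_root n (a : K) :
  (0 < n)%N -> exists x : K, x ^+ n = a.
Proof.
move=> n_gt0; have : size ('X^n - a%:P) != 1%N by rewrite size_XnsubC // eqSS -lt0n.
by case/closed_rootP=> x; rewrite rootE !hornerE subr_eq0 => /eqP; exists x.
Qed.

Lemma bitangent_scale_form F b (lam : K) :
  lam != 0 -> bitangent (lam *: F) b <-> bitangent F b.
Proof.
have scale nu F' : bitangent F' b -> bitangent (nu *: F') b.
  case=> r [c [hr ->]]; have [s hs] := closed_field_root 2 nu isT.
  exists (s *: r), (nu *: c); split; first exact: dhomogZ.
  by rewrite exprZn hs scalerDr -scalerAr.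
move=> lam0; split; last exact: scale.
by move/(scale lam^-1); rewrite scalerA mulVf // scale1r.
Qed.

Lemma bitangent_iso {M F G} :
  iso_by M F G -> forall b, bitangent F b <-> bitangent G (b *m invmx M).
Proof.
case=> uM [lam [lam0 hG]] b; split.
  move/(bitangent_scale_form F b lam lam0)/(bitangent_subst (invmx M)).
  by rewrite -hG subst_mulmx mulmxV // subst1mx.
by move/(bitangent_subst M); rewrite hG mulmxKV // bitangent_scale_form.
Qed.

Lemma sigmaM_fixed_rescale {q} {A : 'M[K]_3} {c : K} :
  (1 < q)%N -> c != 0 -> sigmaM q A = c *: A ->
  exists2 mu : K, mu != 0 & sigmaM q (mu *: A) = mu *: A.
Proof.
move=> q_gt1 c0 hA; have [mu hmu] : exists mu, mu ^+ q.-1 = c^-1.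
  by apply: closed_field_root; rewrite ltn_predRL.
have mu0 : mu != 0.
  apply: contraNneq (invr_neq0 c0) => mu0.
  by rewrite -hmu mu0 expr0n eqn0Ngt ltn_predRL q_gt1.
exists mu => //; have sigmaZ : sigmaM q (mu *: A) = mu ^+ q *: sigmaM q A.
  by apply/matrixP=> i j; rewrite !mxE /frob exprMn.
by rewrite sigmaZ hA scalerA -(prednK (ltnW q_gt1)) exprS hmu mulfVK.
Qed.
End ClosedField.

Lemma sqrrD_pchar2 (R : comNzRingType) : (2 \in [pchar R])%N ->
  forall x y : R, (x + y) ^+ 2 = x ^+ 2 + y ^+ 2.
Proof. by move=> pchar2 x y; rewrite sqrrD mulr2n addrr_pchar2 // addr0. Qed.

Lemma bitangent_CQ (K : fieldType) (Q Q' : {mpoly K[3]}) (b : 'rV[K]_3) :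
  (2 \in [pchar K])%N -> Q \is 2.-homog -> Q' \is 2.-homog ->
  bitangent (CQ Q) b -> bitangent (CQ Q') b.
Proof.
move=> pcharK hQ hQ' [r [c [hr hCQ]]]; exists (Q' + Q + r), c; split.
  by rewrite !rpredD.
have pchar2 : (2 \in [pchar {mpoly K[3]}])%N by rewrite pchar_lalg.
have -> : CQ Q' = Q' ^+ 2 + Q ^+ 2 + (r ^+ 2 + linform b * c).
  by rewrite -hCQ /CQ -addrA addKr_pchar2.
by rewrite !sqrrD_pchar2 // !addrA.
Qed.

Section Frobenius.
Context {K : fieldType} {p e : nat}.
Hypothesis pcharK : (p \in [pchar K])%N.
Local Notation q := (p ^ e)%N.

Lemma frob_is_nmod_morphism : nmod_morphism (frob (K:=K) q).
Proof.
have p_prime := pcharf_prime pcharK.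
split; first by rewrite /frob expr0n expn_eq0 eqn0Ngt prime_gt0.
move=> x y; rewrite /frob exprDn_pchar //.
by rewrite (eq_pnat _ (pcharf_eq pcharK)) pnatX pnat_id.
Qed.

Lemma frob_is_monoid_morphism : monoid_morphism (frob (K:=K) q).
Proof. by split=> [|x y]; rewrite /frob ?expr1n ?exprMn. Qed.

HB.instance Definition _ := GRing.isNmodMorphism.Build K K (frob q)
  frob_is_nmod_morphism.
HB.instance Definition _ := GRing.isMonoidMorphism.Build K K (frob q)
  frob_is_monoid_morphism.

Lemma sigmaM_cocycle_quotient {g M M' : 'M[K]_3} :
  g \in unitmx -> M' \in unitmx -> M \in unitmx ->
  cocycle_eq q M g -> cocycle_eq q M' g ->
  exists2 c : K, c != 0 & sigmaM q (invmx M' *m M) = c *: (invmx M' *m M).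
Proof.
move=> ug uM' uM [c [c0 hc]] [c' [c0' hc']]; set A := invmx M' *m M.
have sigma_cocycle N d : N \in unitmx -> sigmaM q N *m invmx N = d *: g ->
    sigmaM q N = d *: (g *m N).
  by move=> uN hN; rewrite scalemxAl -hN mulmxKV.
have hMA : M = M' *m A by rewrite /A mulKVmx.
have uU : g *m M' \in unitmx by rewrite unitmx_mul ug.
have : (g *m M') *m (c' *: sigmaM q A) = (g *m M') *m (c *: A).
  rewrite -scalemxAr scalemxAl -(sigma_cocycle M' c') // /sigmaM -map_mxM.
  by rewrite -hMA -/(sigmaM q M) (sigma_cocycle M c) // {1}hMA mulmxA scalemxAr.
move/(can_inj (mulKmx uU))/(canRL (scalerK c0')); rewrite scalerA => hA.
by exists (c' ^-1 * c); rewrite // mulf_neq0 ?invr_eq0.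
Qed.
End Frobenius.

Theorem lemma1p4 (K : closedFieldType) (hchar : (2 \in [pchar K])%N)
  (halg : algebraic_over_F2 K) (e : nat) (he : (0 < e)%N)
  (g : 'M[K]_3) (hg : inGamma g)
  (F F' : {mpoly K[3]})
  (hF : ord_quartic_over_k (2 ^ e) F) (hF' : ord_quartic_over_k (2 ^ e) F')
  (Q Q' : {mpoly K[3]}) (hQ : inD (2 ^ e) g Q) (hQ' : inD (2 ^ e) g Q')
  (M M' : 'M[K]_3) (hM : iso_by M F (CQ Q)) (hM' : iso_by M' F' (CQ Q'))
  (hc : cocycle_eq (2 ^ e) M g) (hc' : cocycle_eq (2 ^ e) M' g) :
  exists eta : 'M[K]_3, in_PGL3_k (2 ^ e) eta /\
    forall a : 'rV[K]_3, a != 0 ->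
      (bitangent F' a <-> bitangent F (a *m eta)).
Proof.
have [[uM _] [uM' _]] := (hM, hM').
have [c c0 hA] := sigmaM_cocycle_quotient hchar hg.1 uM' uM hc hc'.
have q_gt1 : (1 < 2 ^ e)%N by rewrite -{1}(expn0 2) ltn_exp2l.
have [mu mu0 hfix] := sigmaM_fixed_rescale q_gt1 c0 hA.
exists (mu *: (invmx M' *m M)); split.
  split; first by rewrite unitmxZ ?unitfE // unitmx_mul unitmx_inv uM' uM.
  by move=> i j; move/matrixP: hfix => /(_ i j); rewrite mxE.
move=> a _; rewrite -scalemxAr bitangent_scale_line //.
rewrite (bitangent_iso hM') (bitangent_iso hM) mulmxA mulmxK //.
have [/inQset_homog hQ2 _] := hQ; have [/inQset_homog hQ'2 _] := hQ'.
by split; apply: bitangent_CQ.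
Qed.
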